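(* Let $R$ be a ring, $n\in\{0,1,2,\dots\}\cup\{\infty\}$, and $\Upsilon:0\to A\xrightarrow{f}B\xrightarrow{g}C\to0$ a short exact sequence of left $R$-modules. The following are equivalent: (1) $\Upsilon$ is $n$-exact; (2) $0\to\mathrm{Hom}_R(P,A)\to\mathrm{Hom}_R(P,B)\to\mathrm{Hom}_R(P,C)\to0$ is exact for every $n$-projective module $P$. If moreover $R$ is commutative, these are also equivalent to: (3) $0\to\mathrm{Hom}_R(C,I)\to\mathrm{Hom}_R(B,I)\to\mathrm{Hom}_R(A,I)\to0$ is exact for every $n$-injective module $I$.
   Context: $R$ is an associative ring with identity; modules are left $R$-modules; $\infty+1=\infty$. For a positive integer $k$, $\mathcal{P}^{<k}$ is the class of modules $M$ admitting an exact sequence $0\to P_j\to\cdots\to P_0\to M\to 0$ with $j\le k-1$ and every $P_i$ finitely generated projective; $\mathcal{P}^{<\infty}$ is the class of modules admitting such a sequence for some finite $j$. A short exact sequence is $n$-exact if it stays exact under $\mathrm{Hom}_R(M,-)$ for all $M\in\mathcal{P}^{<n+1}$. A module $P$ is $n$-projective if $\mathrm{Hom}_R(P,-)$ preserves exactness of every $n$-exact sequence; $I$ is $n$-injective if $\mathrm{Hom}_R(-,I)$ preserves exactness of every $n$-exact sequence. *)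

From HB Require Import structures.
From mathcomp Require Import all_boot all_order all_algebra.
Set Implicit Arguments. Unset Strict Implicit. Unset Printing Implicit Defensive.
Import GRing.Theory.
Local Open Scope ring_scope.

Section Defs.
Variable R : pzRingType.

Definition short_exact (A B C : lmodType R) (f : {linear A -> B}) (g : {linear B -> C}) : Prop :=
  [/\ (forall a, f a = 0 -> a = 0),
      (forall a, g (f a) = 0),
      (forall b, g b = 0 -> exists a, f a = b)
    & (forall c, exists b, g b = c)].

Definition hom_cov_exact (M A B C : lmodType R) (f : {linear A -> B}) (g : {linear B -> C}) : Prop :=
  [/\ (forall h : {linear M -> A}, (forall x, f (h x) = 0) -> forall x, h x = 0),
      (forall h : {linear M -> A}, forall x, g (f (h x)) = 0),
      (forall h : {linear M -> B}, (forall x, g (h x) = 0) ->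
          exists h' : {linear M -> A}, forall x, f (h' x) = h x)
    & (forall h : {linear M -> C}, exists h' : {linear M -> B}, forall x, g (h' x) = h x)].

Definition hom_contra_exact (I A B C : lmodType R) (f : {linear A -> B}) (g : {linear B -> C}) : Prop :=
  [/\ (forall h : {linear C -> I}, (forall b, h (g b) = 0) -> forall c, h c = 0),
      (forall h : {linear C -> I}, forall a, h (g (f a)) = 0),
      (forall h : {linear B -> I}, (forall a, h (f a) = 0) ->
          exists h' : {linear C -> I}, forall b, h' (g b) = h b)
    & (forall h : {linear A -> I}, exists h' : {linear B -> I}, forall a, h' (f a) = h a)].

Definition finitely_generated (M : lmodType R) : Prop :=
  exists (k : nat) (v : 'I_k -> M), forall x : M,
    exists c : 'I_k -> R, x = \sum_(i < k) c i *: v i.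

Definition projective (P : lmodType R) : Prop :=
  forall (M N : lmodType R) (p : {linear M -> N}), (forall y, exists x, p x = y) ->
  forall h : {linear P -> N}, exists h' : {linear P -> M}, forall x, p (h' x) = h x.

Definition fg_projective (P : lmodType R) : Prop :=
  finitely_generated P /\ projective P.

(* "the map out of P_i is zero on x": P_0 -> M is eps, P_(i+1) -> P_i is d i *)
Definition out_zero (M : lmodType R) (P : nat -> lmodType R)
  (d : forall i, {linear P i.+1 -> P i}) (eps : {linear P 0%N -> M}) (i : nat) : P i -> Prop :=
  match i return P i -> Prop with
  | 0%N => fun x => eps x = 0
  | i'.+1 => fun x => d i' x = 0
  end.

Definition fgp_resolution (j : nat) (M : lmodType R) : Prop :=
  exists (P : nat -> lmodType R) (d : forall i, {linear P i.+1 -> P i})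
         (eps : {linear P 0%N -> M}),
  [/\ (forall i, (i <= j)%N -> fg_projective (P i)),
      (forall m, exists x, eps x = m),
      (forall i, (i < j)%N -> forall y : P i.+1, out_zero d eps (d i y)),
      (forall i, (i < j)%N -> forall x : P i, out_zero d eps x -> exists y, d i y = x)
    & (forall x : P j, out_zero d eps x -> x = 0)].

(* n ∈ ℕ ∪ {∞} is encoded as [option nat], None = ∞.
   M ∈ P^{<n+1}: resolution length j <= n (any finite j when n = ∞). *)
Definition in_P_lt_succ (n : option nat) (M : lmodType R) : Prop :=
  match n with
  | Some m => exists j, (j <= m)%N /\ fgp_resolution j M
  | None => exists j, fgp_resolution j M
  end.

Definition n_exact (n : option nat) (A B C : lmodType R)
  (f : {linear A -> B}) (g : {linear B -> C}) : Prop :=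
  short_exact f g /\ forall M : lmodType R, in_P_lt_succ n M -> hom_cov_exact M f g.

Definition n_projective (n : option nat) (P : lmodType R) : Prop :=
  forall (A B C : lmodType R) (f : {linear A -> B}) (g : {linear B -> C}),
    n_exact n f g -> hom_cov_exact P f g.

Definition n_injective (n : option nat) (I : lmodType R) : Prop :=
  forall (A B C : lmodType R) (f : {linear A -> B}) (g : {linear B -> C}),
    n_exact n f g -> hom_contra_exact I f g.

End Defs.

(* (1) <-> (2) is formal: a module of P^{<n+1} is itself n-projective.
   For (3) -> (1), present M in P^{<n+1} as P1 -> P0 -> M -> 0 with P0, P1
   finitely generated projective, and let T = coker (Hom(P0,R) -> Hom(P1,R))
   be its transpose.  For a short exact sequence 0 -> A -> B -> C -> 0 the
   following are equivalent: Hom(M,-) is exact on it; T (x) A -> T (x) B is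
   injective, where T (x) X = coker (Hom(P0,X) -> Hom(P1,X)); Hom(-,T^+) is
   exact on it, where T^+ = Hom_Z(T, Q/Z) (this step uses that Q/Z is an
   injective cogenerator of abelian groups).  Hence T^+ is n-injective, and
   (3) applied to I = T^+ gives the exactness of Hom(M,-). *)

From HB Require Import structures.
From mathcomp Require Import all_boot all_order all_algebra.
From mathcomp Require Import boolp classical_sets functions.

Set Implicit Arguments.
Unset Strict Implicit.
Unset Printing Implicit Defensive.

Import GRing.Theory Num.Theory Order.TTheory.
Local Open Scope ring_scope.
Local Open Scope classical_set_scope.

(** * Q/Z *)

Definition fracq (r : rat) : rat := r - (Num.floor r)%:~R.

Lemma fracqDz r (z : int) : fracq (r + z%:~R) = fracq r.
Proof.
by rewrite /fracq floorDrz ?intr_int // intrKfloor rmorphD /= opprD addrACA subrr addr0.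
Qed.

Lemma fracqE r : fracq r = r + (- Num.floor r)%:~R.
Proof. by rewrite rmorphN. Qed.

Lemma fracqK r : fracq (fracq r) = fracq r.
Proof. by rewrite [fracq r in LHS]fracqE fracqDz. Qed.

Lemma fracqDl r s : fracq (fracq r + s) = fracq (r + s).
Proof. by rewrite [fracq r]fracqE addrAC fracqDz. Qed.

Lemma fracq_eq0 r : (fracq r == 0) = (r \is a Num.int).
Proof. by rewrite /fracq subr_eq0 eq_sym intrEfloor. Qed.

(* Q/Z, each class represented by its element of [0, 1). *)
Record QmodZ := QZ { qzval : rat; _ : fracq qzval == qzval }.
HB.instance Definition _ := [isSub for qzval].
HB.instance Definition _ := [Choice of QmodZ by <:].

Definition qzpi (r : rat) : QmodZ := QZ (introT eqP (fracqK r)).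

Lemma qzpi_eq r s : qzpi r = qzpi s <-> fracq r = fracq s.
Proof. by split=> e; [exact: (congr1 qzval e) | exact: val_inj]. Qed.

Lemma qzvalK : cancel qzval qzpi.
Proof. by case=> r r_frac; apply: val_inj; apply/eqP. Qed.

Definition qzadd x y := qzpi (qzval x + qzval y).
Definition qzopp x := qzpi (- qzval x).

Lemma qzaddE r s : qzadd (qzpi r) (qzpi s) = qzpi (r + s).
Proof. by apply/qzpi_eq; rewrite /= fracqDl addrC fracqDl addrC. Qed.

Lemma qzoppE r : qzopp (qzpi r) = qzpi (- r).
Proof. by apply/qzpi_eq; rewrite /= [fracq r]fracqE opprD -rmorphN fracqDz. Qed.

Lemma qzaddA : associative qzadd.
Proof. by move=> x y z; rewrite -[x]qzvalK -[y]qzvalK -[z]qzvalK !qzaddE addrA. Qed.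

Lemma qzaddC : commutative qzadd.
Proof. by move=> x y; rewrite -[x]qzvalK -[y]qzvalK !qzaddE addrC. Qed.

Lemma qzadd0 : left_id (qzpi 0) qzadd.
Proof. by move=> x; rewrite -[x]qzvalK qzaddE add0r. Qed.

Lemma qzaddN : left_inverse (qzpi 0) qzopp qzadd.
Proof. by move=> x; rewrite -[x]qzvalK qzoppE qzaddE addNr. Qed.

HB.instance Definition _ := GRing.isZmodule.Build QmodZ qzaddA qzaddC qzadd0 qzaddN.

Lemma qzpi_is_zmod_morphism : zmod_morphism qzpi.
Proof. by move=> r s; rewrite -qzaddE -qzoppE. Qed.

HB.instance Definition _ :=
  GRing.isZmodMorphism.Build rat QmodZ qzpi qzpi_is_zmod_morphism.

Lemma qzpi_eq0 r : qzpi r = 0 <-> r \is a Num.int.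
Proof.
by rewrite -[0]/(qzpi 0) qzpi_eq -fracq_eq0 {2}/fracq floor0 subr0; split=> /eqP.
Qed.

Definition divisible (D : zmodType) :=
  forall (m : nat) (x : D), (0 < m)%N -> exists y, y *+ m = x.

Lemma QmodZ_divisible : divisible QmodZ.
Proof.
move=> m x m_gt0; exists (qzpi (qzval x / m%:R)).
rewrite -raddfMn -[_ *+ m]mulr_natr divfK; first exact: qzvalK.
by rewrite pnatr_eq0 -lt0n.
Qed.

Lemma QmodZ_torsion (m : nat) : m != 1%N -> exists e : QmodZ, e != 0 /\ e *+ m = 0.
Proof.
have inv_neq0 k : (1 < k)%N -> qzpi k%:R^-1 != 0.
  move=> k_gt1; apply/eqP => /qzpi_eq0 k_int.
  have k_gt0 : (0 < k%:R :> rat) by rewrite ltr0n ltnW.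
  have := norm_intr_ge1 k_int; rewrite gtr0_norm ?invr_gt0 // invf_ge1 //.
  by rewrite invr_eq0 gt_eqF // lern1 leqNgt k_gt1 => /(_ isT).
case: m => [|m] m_neq1.
  by exists (qzpi 2%:R^-1); split; [exact: inv_neq0 | rewrite mulr0n].
exists (qzpi m.+1%:R^-1); split; first by apply: inv_neq0; case: m m_neq1.
rewrite -raddfMn -[_ *+ _]mulr_natr mulVf ?pnatr_eq0 //.
by apply: (qzpi_eq0 1).2; exact: rpred1.
Qed.

(** * Extending homomorphisms into a divisible group *)

Section Subgroups.
Variable V : zmodType.
Implicit Types S : set V.

Definition subgroup S := S 0 /\ forall x y, S x -> S y -> S (x - y).

Lemma subgroupN S x : subgroup S -> S x -> S (- x).
Proof. by move=> [S0 SB] Sx; rewrite -sub0r; apply: SB. Qed.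

Lemma subgroupD S x y : subgroup S -> S x -> S y -> S (x + y).
Proof. by move=> SG Sx Sy; rewrite -[y]opprK; apply: SG.2 => //; apply: subgroupN. Qed.

Lemma subgroupMz S x k : subgroup S -> S x -> S (x *~ k).
Proof.
move=> SG Sx; have SMn n : S (x *+ n).
  by elim: n => [|n IH]; [rewrite mulr0n; exact: SG.1 | rewrite mulrS; apply: subgroupD].
by case: k => n; [rewrite -pmulrn | rewrite NegzE mulrNz -pmulrn; apply: subgroupN].
Qed.

Lemma subgroup_multiples S v :
  subgroup S -> exists m : nat, forall k, S (v *~ k) <-> (m %| k)%Z.
Proof.
move=> SG; have Smul (m : nat) (q : int) : S (v *+ m) -> S (v *~ (q * m)).
  by move=> Sm; rewrite [q * _]mulrC mulrzA -pmulrn; apply: subgroupMz.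
have [[n [n_gt0 Sn]]|noPos] := pselect (exists n : nat, (0 < n)%N /\ S (v *+ n)).
  pose P n := `[< (0 < n)%N /\ S (v *+ n) >].
  have exP : exists n, P n by exists n; apply/asboolP.
  have [m /asboolP [m_gt0 Sm] m_min] := ex_minnP exP.
  exists m => k; split=> [Sk|/dvdzP [q ->]]; last exact: Smul.
  have m_neq0 : m%:Z != 0 by rewrite eqz_nat -lt0n.
  have m_pos : 0 < m%:Z by rewrite ltz_nat.
  have Sr : S (v *~ (k %% m%:Z)%Z).
    have -> : (k %% m%:Z)%Z = k - (k %/ m%:Z)%Z * m.
      by rewrite {2}(divz_eq k m%:Z) addrAC subrr add0r.
    rewrite mulrzBr; apply: SG.2 => //.
    exact: Smul.
  apply/dvdz_mod0P; move: Sr (modz_ge0 k m_neq0) (ltz_pmod k m_pos).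
  case: (k %% m%:Z)%Z => [[|r]|//] // Sr _ r_lt.
  have /m_min : P r.+1 by apply/asboolP; rewrite pmulrn.
  by rewrite leqNgt -ltz_nat r_lt.
exists 0%N => k; rewrite dvd0z; split=> [Sk|/eqP->]; last by rewrite mulr0z; exact: SG.1.
apply/eqP; apply: contra_notP noPos => /eqP k_neq0.
exists `|k|%N; split; first by rewrite absz_gt0.
case: k k_neq0 Sk => n _ Sk; first by rewrite pmulrn.
by move: Sk; rewrite NegzE mulrNz -pmulrn => /(subgroupN SG); rewrite opprK.
Qed.
End Subgroups.

Section DivisibleExtension.
Variables G D : zmodType.
Implicit Types (Gam : set (G * D)) (v : G) (e : D).

Definition hom_graph Gam := subgroup Gam /\ forall d, Gam (0, d) -> d = 0.

Lemma hom_graph_fun Gam x d d' : hom_graph Gam -> Gam (x, d) -> Gam (x, d') -> d = d'.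
Proof.
move=> [SG Gam0] h h'; apply/eqP; rewrite -subr_eq0; apply/eqP/Gam0.
by rewrite -(subrr x); exact: SG.2 _ _ h h'.
Qed.

Lemma pairMz (z : G * D) k : z *~ k = (z.1 *~ k, z.2 *~ k).
Proof. by rewrite [LHS]surjective_pairing (raddfMz fst) (raddfMz snd). Qed.

Definition adjoin Gam v e : set (G * D) :=
  fun z => exists x d k, Gam (x, d) /\ z = (x + v *~ k, d + e *~ k).

Lemma adjoin_sup Gam v e : Gam `<=` adjoin Gam v e.
Proof. by case=> x d Gxd; exists x, d, 0; rewrite !mulr0z !addr0. Qed.

Lemma adjoin_gen Gam v e : Gam (0, 0) -> adjoin Gam v e (v, e).
Proof. by exists 0, 0, 1; rewrite !add0r !mulr1z. Qed.

Lemma hom_graph_adjoin Gam v e : hom_graph Gam ->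
  (forall k d, Gam (v *~ k, d) -> d = e *~ k) -> hom_graph (adjoin Gam v e).
Proof.
move=> [SG Gam0] compat; split; first split.
- exact: adjoin_sup SG.1.
- move=> _ _ [x1 [d1 [k1 [h1 ->]]]] [x2 [d2 [k2 [h2 ->]]]].
  exists (x1 - x2), (d1 - d2), (k1 - k2); split; first exact: SG.2 _ _ h1 h2.
  by congr pair; rewrite /= mulrzBr opprD addrACA.
- move=> d' [x [d [k [h [/esym/eqP]]]]]; rewrite addr_eq0 => /eqP x_eq ->.
  by move: h; rewrite x_eq -mulrNz => /compat ->; rewrite mulrNz addNr.
Qed.

Lemma hom_graph_compatible Gam v :
  divisible D -> hom_graph Gam -> exists e, forall k d, Gam (v *~ k, d) -> d = e *~ k.
Proof.
move=> divD hG; have [SG Gam0] := hG.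
have dom_sub : subgroup (fun x => exists d, Gam (x, d)).
  split; first by exists 0; exact: SG.1.
  by move=> x y [d h] [d' h']; exists (d - d'); exact: SG.2 _ _ h h'.
have [m mP] := subgroup_multiples v dom_sub.
(* e is an m-th root of the value at v *~ m, where m Z is the set of k
   with v *~ k in the domain of Gam. *)
have [dm Gm] : exists dm, Gam (v *~ m, dm) by apply/mP; rewrite dvdzz.
have [e em] : exists e, e *+ m = dm.
  case: m {mP} Gm => [|m] Gm; last exact: divD.
  by exists 0; move: Gm; rewrite mulr0z mulr0n => /Gam0 ->.
exists e => k d h; have /mP/dvdzP [q kq] : exists d, Gam (v *~ k, d) by exists d.
have := subgroupMz q SG Gm; rewrite pairMz /= mulrzA_C -kq => /(hom_graph_fun hG h) ->.
by rewrite -em pmulrn mulrzA_C -kq.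
Qed.

Lemma hom_graph_chain Gam0 (F : set (set (G * D))) : hom_graph Gam0 ->
  (forall X, F X -> hom_graph (Gam0 `|` X)) -> total_on F subset ->
  hom_graph (Gam0 `|` \bigcup_(X in F) X).
Proof.
move=> hG0 FP Ftot; set U := Gam0 `|` _.
have common z1 z2 : U z1 -> U z2 ->
    exists Y, [/\ hom_graph Y, Y `<=` U, Y z1 & Y z2].
  have sub X : F X -> Gam0 `|` X `<=` U by move=> FX; apply: setUS; exact: bigcup_sup.
  move=> [h1|[X1 FX1 h1]] [h2|[X2 FX2 h2]].
  - by exists Gam0; split => //; exact: subsetUl.
  - by exists (Gam0 `|` X2); split; [exact: FP | exact: sub | left | right].
  - by exists (Gam0 `|` X1); split; [exact: FP | exact: sub | right | left].
  - have [X12|X21] := Ftot _ _ FX1 FX2.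
      by exists (Gam0 `|` X2); split; [exact: FP | exact: sub | right; apply: X12 | right].
    by exists (Gam0 `|` X1); split; [exact: FP | exact: sub | right | right; apply: X21].
split; first split.
- by left; exact: hG0.1.1.
- move=> z1 z2 U1 U2; have [Y [[[_ SY] _] YU Y1 Y2]] := common _ _ U1 U2.
  exact/YU/SY.
- move=> d U0; have [Y [[_ Y0] _ Yd _]] := common _ _ U0 U0; exact: Y0.
Qed.

Theorem divisible_hom_extend Gam0 : divisible D -> hom_graph Gam0 ->
  exists Phi : {additive G -> D}, forall x d, Gam0 (x, d) -> Phi x = d.
Proof.
move=> divD hG0.
(* Zorn_bigcup also sees the empty chain, hence the union with Gam0. *)
have [A [PA Amax]] := @Zorn_bigcup _ (fun X => hom_graph (Gam0 `|` X))
  (fun F FP Ftot => hom_graph_chain hG0 FP Ftot).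
set Gam := Gam0 `|` A.
have total v : exists d, Gam (v, d).
  apply: contrapT => v_out; have [e compat] := hom_graph_compatible v divD PA.
  apply: (Amax (adjoin Gam v e)).
    split=> [z Az|sub]; first by apply: adjoin_sup; right.
    by apply: v_out; exists e; right; apply/sub/adjoin_gen; exact: PA.1.1.
  rewrite (setUidr (subset_trans (@subsetUl _ _ A) (@adjoin_sup Gam v e))).
  exact: hom_graph_adjoin.
pose Phi x := sval (cid (total x)).
have PhiP x : Gam (x, Phi x) by rewrite /Phi; case: cid.
have Phi_morph : zmod_morphism Phi.
  by move=> x y; apply: (hom_graph_fun PA (PhiP _)); exact: PA.1.2 _ _ (PhiP x) (PhiP y).
exists (HB.pack_for {additive G -> D} Phi (GRing.isZmodMorphism.Build G D Phi Phi_morph)).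
by move=> x d h; apply: (hom_graph_fun PA (PhiP _)); left.
Qed.

End DivisibleExtension.

Lemma QmodZ_separates (G : zmodType) (S : set G) v : subgroup S -> ~ S v ->
  exists Phi : {additive G -> QmodZ}, (forall x, S x -> Phi x = 0) /\ Phi v != 0.
Proof.
move=> SG Sv; have [m mP] := subgroup_multiples v SG.
have [e [e_neq0 em]] : exists e : QmodZ, e != 0 /\ e *+ m = 0.
  apply: QmodZ_torsion; apply/negP => /eqP m1; apply: Sv.
  by rewrite -[v]mulr1z; apply/mP; rewrite m1 dvd1z.
pose Gam0 : set (G * QmodZ) := fun z => S z.1 /\ z.2 = 0.
have hG0 : hom_graph Gam0.
  split; last by move=> d [].
  split; first by split=> //; exact: SG.1.
  by move=> [x d] [y d'] [Sx /= ->] [Sy /= ->]; split; [exact: SG.2 | exact: subrr].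
have compat k d : Gam0 (v *~ k, d) -> d = e *~ k.
  by move=> [/mP/dvdzP [q ->] /= ->]; rewrite -mulrzA_C -pmulrn em mul0rz.
have [Phi PhiP] :=
  divisible_hom_extend QmodZ_divisible (hom_graph_adjoin hG0 compat).
exists Phi; split=> [x Sx|]; first by apply: PhiP; apply: adjoin_sup.
by rewrite (PhiP v e) //; apply: adjoin_gen; split=> //; exact: SG.1.
Qed.

(** * Linear maps and presentations *)

Section Modules.
Variable R : pzRingType.

Definition linmap (U V : lmodType R) (F : U -> V) (lF : linear F) : {linear U -> V} :=
  HB.pack_for {linear U -> V} F (GRing.isLinear.Build R U V *:%R F lF).

Lemma linearD_fun (U V : lmodType R) (F G : U -> V) : linear F -> linear G -> linear (F + G).
Proof. by move=> lF lG; exact: linearP (linmap lF \+ linmap lG). Qed.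

Lemma linear_factor_surj (X Y Z : lmodType R) (q : {linear X -> Y}) (u : {linear X -> Z}) :
  (forall y, exists x, q x = y) -> (forall x, q x = 0 -> u x = 0) ->
  exists h : {linear Y -> Z}, forall x, h (q x) = u x.
Proof.
move=> q_surj u_ker.
have u_fibre x x' : q x = q x' -> u x = u x'.
  by move=> e; apply/eqP; rewrite -subr_eq0 -linearB u_ker // linearB e subrr.
pose h y := u (sval (cid (q_surj y))).
have hq x : h (q x) = u x by rewrite /h; case: cid => x' /= /u_fibre.
have h_lin : linear h.
  move=> r y y'; have [x <-] := q_surj y; have [x' <-] := q_surj y'.
  by rewrite -linearP !hq linearP.
by exists (linmap h_lin).
Qed.

Variables (A B C : lmodType R) (f : {linear A -> B}) (g : {linear B -> C}).
Hypothesis fg_exact : short_exact f g.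

Lemma short_exact_factor_ker (X : lmodType R) (u : {linear X -> B}) :
  (forall x, g (u x) = 0) -> exists w : {linear X -> A}, forall x, f (w x) = u x.
Proof.
have [f_inj _ ker_g _] := fg_exact; move=> gu0.
pose w x := sval (cid (ker_g _ (gu0 x))).
have fw x : f (w x) = u x by rewrite /w; case: cid.
have w_lin : linear w.
  move=> r x y; apply/eqP; rewrite -subr_eq0; apply/eqP/f_inj.
  by rewrite !linearB linearP /= !fw linearP subrr.
by exists (linmap w_lin).
Qed.

Lemma hom_cov_exact_of_lift (M : lmodType R) :
  (forall h : {linear M -> C}, exists h' : {linear M -> B}, forall x, g (h' x) = h x) ->
  hom_cov_exact M f g.
Proof.
have [f_inj gf0 _ _] := fg_exact; move=> lift; split=> // [h fh0 x|h gh0].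
  exact/f_inj/fh0.
exact: short_exact_factor_ker.
Qed.

Lemma hom_contra_exact_of_extend (I : lmodType R) :
  (forall h : {linear A -> I}, exists h' : {linear B -> I}, forall a, h' (f a) = h a) ->
  hom_contra_exact I f g.
Proof.
have [_ gf0 ker_g g_surj] := fg_exact; move=> extend; split=> // [h hg0 c|h a|h hf0].
- by have [b <-] := g_surj c; exact: hg0.
- by rewrite gf0 linear0.
- by apply: linear_factor_surj => // b /ker_g [a <-].
Qed.

End Modules.

Definition dual_basis (R : pzRingType) (P : lmodType R) (k : nat)
    (xs : 'I_k -> {linear P -> R^o}) (ps : 'I_k -> P) :=
  forall p, p = \sum_(i < k) (xs i p : R) *: ps i.

Lemma fg_projective_dual_basis (R : pzRingType) (P : lmodType R) : fg_projective P ->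
  exists k (xs : 'I_k -> {linear P -> R^o}) (ps : 'I_k -> P), dual_basis xs ps.
Proof.
move=> [[k [ps ps_gen]] P_proj].
pose comb (c : 'I_k -> R^o) : P := \sum_(i < k) (c i : R) *: ps i.
have comb_lin : linear comb.
  move=> r c c'; rewrite /comb scaler_sumr -big_split /=.
  by apply: eq_bigr => i _; rewrite scalerDl scalerA.
have comb_surj y : exists c, linmap comb_lin c = y by have [c ->] := ps_gen y; exists c.
have [s sK] := P_proj _ _ _ comb_surj (@linmap _ P P id (fun _ _ _ => erefl)).
pose coord i (c : 'I_k -> R^o) := c i.
have coord_lin i : linear (coord i) by [].
exists k, (fun i => linmap (coord_lin i) \o s)%FUN, ps => p.
by rewrite -[p in LHS]sK.
Qed.

Definition fgp_presentation (R : pzRingType) (M P0 P1 : lmodType R)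
    (d0 : {linear P1 -> P0}) (eps : {linear P0 -> M}) :=
  [/\ fg_projective P0, fg_projective P1, (forall m, exists x, eps x = m),
      (forall y, eps (d0 y) = 0) & (forall x, eps x = 0 -> exists y, d0 y = x)].

Lemma fgp_resolution_presentation (R : pzRingType) j (M : lmodType R) :
  fgp_resolution j M -> exists (P0 P1 : lmodType R) (d0 : {linear P1 -> P0})
    (eps : {linear P0 -> M}), fgp_presentation d0 eps.
Proof.
case=> P [d [eps [P_fgp eps_surj d_comp d_exact P_last]]].
case: j P_fgp d_comp d_exact P_last => [|j] P_fgp d_comp d_exact P_last.
  have P0_fgp := P_fgp 0%N isT.
  exists (P 0%N), (P 0%N), \0, eps; split=> // [y|x /P_last ->]; last by exists 0.
  by rewrite /= linear0.
exists (P 0%N), (P 1%N), (d 0%N), eps.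
by split; [exact: P_fgp | exact: P_fgp | done | exact: d_comp | exact: d_exact].
Qed.

Lemma in_P_lt_succ_resolution (R : pzRingType) n (M : lmodType R) :
  in_P_lt_succ n M -> exists j, fgp_resolution j M.
Proof. by case: n => [m [j [_ res]]|[j res]]; exists j. Qed.

(** * The character module of the transpose *)

Section TransposeCharacter.
Variable R : pzRingType.
Hypothesis mulRC : forall a b : R, a * b = b * a.
Variables (P0 P1 : lmodType R) (d0 : {linear P1 -> P0}).

Lemma linear_scale_dual (U : lmodType R) (r : R) (x : U -> R^o) :
  linear x -> linear (r *: x).
Proof.
by move=> x_lin a p q; rewrite !scalrfctE x_lin scalerDr !scalerA mulRC.
Qed.

Definition tensor (U W : lmodType R) (x : U -> R^o) (w : W) : U -> W :=
  fun p => (x p : R) *: w.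

Lemma linear_tensor (U W : lmodType R) (w : W) (x : U -> R^o) :
  linear x -> linear (tensor x w).
Proof.
move=> x_lin a p q; rewrite /tensor x_lin scalerDl.
by have -> : a *: (x p : R^o) = a * x p by []; rewrite scalerA.
Qed.

(* The character module Hom_Z(T, Q/Z) of T = coker (Hom(P0,R) -> Hom(P1,R)):
   additive functionals on the linear maps P1 -> R that kill those factoring
   through d0, extended by 0 to all functions P1 -> R. *)
Definition is_trchar (psi : (P1 -> R^o) -> QmodZ) :=
  [/\ forall x, ~ linear x -> psi x = 0,
      forall x y, linear x -> linear y -> psi (x + y) = psi x + psi y
    & forall y : {linear P0 -> R^o}, psi (y \o d0) = 0].

Definition trchar_pred : {pred (P1 -> R^o) -> QmodZ} := fun psi => `[< is_trchar psi >].

Lemma trchar_zmod_closed : zmod_closed trchar_pred.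
Proof.
split; first by apply/asboolP; split=> // *; rewrite addr0.
move=> psi1 psi2 /asboolP [n1 D1 V1] /asboolP [n2 D2 V2]; apply/asboolP.
have subE x : (psi1 - psi2) x = psi1 x - psi2 x by [].
split=> [x nx|x y lx ly|y]; rewrite !subE.
- by rewrite n1 ?n2 ?subrr.
- by rewrite D1 ?D2 // opprD addrACA.
- by rewrite V1 V2 subrr.
Qed.

HB.instance Definition _ := GRing.isZmodClosed.Build _ trchar_pred trchar_zmod_closed.

Record trchar := TrChar {
  trchar_val :> (P1 -> R^o) -> QmodZ;
  _ : trchar_val \in trchar_pred }.
HB.instance Definition _ := [isSub for trchar_val].
HB.instance Definition _ := [Choice of trchar by <:].
HB.instance Definition _ := [SubChoice_isSubZmodule of trchar by <:].

Lemma trcharP (psi : trchar) : is_trchar psi.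
Proof. by case: psi => psi psiP; apply/asboolP. Qed.

Lemma trchar_nonlinear (psi : trchar) x : ~ linear x -> psi x = 0.
Proof. by case: (trcharP psi) => + _ _; apply. Qed.

Lemma trcharD (psi : trchar) x y : linear x -> linear y -> psi (x + y) = psi x + psi y.
Proof. by case: (trcharP psi) => _ + _; apply. Qed.

Lemma trchar_d0 (psi : trchar) (y : {linear P0 -> R^o}) : psi (y \o d0) = 0.
Proof. by case: (trcharP psi) => _ _; apply. Qed.

Lemma trchar_eq (psi1 psi2 : trchar) :
  (forall x, linear x -> psi1 x = psi2 x) -> psi1 = psi2.
Proof.
move=> e; apply/val_inj/funext => x.
have [/e //|nx] := pselect (linear x).
exact: etrans (trchar_nonlinear psi1 nx) (esym (trchar_nonlinear psi2 nx)).
Qed.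

Definition trchar_scale_fun (r : R) (psi : trchar) (x : P1 -> R^o) : QmodZ :=
  if `[< linear x >] then psi (r *: x) else 0.

Lemma trchar_scale_subproof r psi : trchar_scale_fun r psi \in trchar_pred.
Proof.
apply/asboolP; rewrite /trchar_scale_fun; split=> [x nx|x y lx ly|y] /=.
- by case: asboolP.
- have lxy := linearD_fun lx ly; rewrite !asboolT //.
  rewrite -(trcharD psi (linear_scale_dual r lx) (linear_scale_dual r ly)).
  by congr (psi _); exact: scalerDr.
- rewrite asboolT; last exact: linearP (y \o d0).
  exact: trchar_d0 (linmap (linear_scale_dual r (linearP y))).
Qed.

Definition trchar_scale r psi := TrChar (trchar_scale_subproof r psi).

Lemma trchar_scaleE r psi x : linear x -> trchar_scale r psi x = psi (r *: x).
Proof. by move=> lx; rewrite /= /trchar_scale_fun asboolT. Qed.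

Lemma trchar_scaleA a b psi : trchar_scale a (trchar_scale b psi) = trchar_scale (a * b) psi.
Proof.
apply: trchar_eq => x lx; rewrite !(trchar_scaleE _ _ lx).
by rewrite (trchar_scaleE _ _ (linear_scale_dual a lx)) scalerA [b * a]mulRC.
Qed.

Lemma trchar_scale1 : left_id 1 trchar_scale.
Proof. by move=> psi; apply: trchar_eq => x lx; rewrite trchar_scaleE // scale1r. Qed.

Lemma trchar_addE (psi1 psi2 : trchar) x : (psi1 + psi2) x = psi1 x + psi2 x.
Proof. by []. Qed.

Lemma trchar_scaleDr : right_distributive trchar_scale +%R.
Proof.
move=> r psi1 psi2; apply: trchar_eq => x lx.
by rewrite trchar_addE !(trchar_scaleE _ _ lx).
Qed.

Lemma trchar_scaleDl psi : {morph trchar_scale^~ psi : a b / a + b}.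
Proof.
move=> a b; apply: trchar_eq => x lx; rewrite trchar_addE !(trchar_scaleE _ _ lx).
rewrite -(trcharD psi (linear_scale_dual a lx) (linear_scale_dual b lx)).
by congr (psi _); exact: scalerDl.
Qed.

HB.instance Definition _ := GRing.Zmodule_isLmodule.Build R trchar
  trchar_scaleA trchar_scale1 trchar_scaleDr trchar_scaleDl.

Definition trchar_lmodType : lmodType R := trchar.

Lemma trcharZE r (psi : trchar) x : linear x -> (r *: psi) x = psi (r *: x).
Proof. exact: trchar_scaleE. Qed.

Lemma trchar_sum_eval k (F : 'I_k -> trchar) x : (\sum_(i < k) F i) x = \sum_(i < k) F i x.
Proof. by elim/big_rec2: _ => // i y psi _ <-. Qed.

Lemma trchar_sum (psi : trchar) k (F : 'I_k -> P1 -> R^o) :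
  (forall i, linear (F i)) -> psi (\sum_(i < k) F i) = \sum_(i < k) psi (F i).
Proof.
move=> F_lin; have psi0 : psi 0 = 0 by exact: trchar_d0 \0.
suff [] : linear (\sum_(i < k) F i) /\ psi (\sum_(i < k) F i) = \sum_(i < k) psi (F i) by [].
apply: (big_ind2 (fun x y => linear x /\ psi x = y)) => // [|x1 x2 y1 y2 [l1 <-] [l2 <-]].
  by split=> //; exact: linearP \0.
by split; [exact: linearD_fun | exact: trcharD].
Qed.

Lemma trchar_of_functional (W : lmodType R) (psi : {additive (P1 -> W) -> QmodZ}) :
  (forall (y : {linear P0 -> R^o}) w, psi (tensor y w \o d0) = 0) ->
  exists al : {linear W -> trchar}, forall w x, linear x -> al w x = psi (tensor x w).
Proof.
move=> psi_d0; pose al_fun w x := if `[< linear x >] then psi (tensor x w) else 0.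
have al_trchar w : al_fun w \in trchar_pred.
  apply/asboolP; rewrite /al_fun; split=> [x nx|x y lx ly|y] /=.
  - by case: asboolP.
  - have lxy := linearD_fun lx ly; rewrite !asboolT // -raddfD.
    by congr (psi _); apply/funext => p; rewrite /tensor /= scalerDl.
  - by rewrite asboolT; [exact: psi_d0 | exact: linearP (y \o d0)].
pose al w := TrChar (al_trchar w).
have alE w x : linear x -> al w x = psi (tensor x w).
  by move=> lx; rewrite /= /al_fun asboolT.
have al_lin : linear al.
  move=> r w w'; apply: trchar_eq => x lx.
  rewrite trchar_addE trcharZE // !alE //; last exact: linear_scale_dual.
  rewrite -raddfD; congr (psi _); apply/funext => p.
  by rewrite /tensor /= scalerDr !scalerA mulRC.
by exists (linmap al_lin).
Qed.

Variables (k1 : nat) (xs : 'I_k1 -> {linear P1 -> R^o}) (ps : 'I_k1 -> P1).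
Hypothesis xs_ps : dual_basis xs ps.
Variables (k0 : nat) (ys : 'I_k0 -> {linear P0 -> R^o}) (qs : 'I_k0 -> P0).
Hypothesis ys_qs : dual_basis ys qs.

Lemma tensor_expand (W : lmodType R) (v : {linear P1 -> W}) :
  \sum_(i < k1) tensor (xs i) (v (ps i)) = v.
Proof.
apply/funext => p; rewrite fct_sumE [in RHS](xs_ps p) linear_sum.
by apply: eq_bigr => i _; rewrite linearZ.
Qed.

Lemma dual_expand (x : P1 -> R^o) : linear x ->
  \sum_(i < k1) x (ps i) *: (xs i : P1 -> R^o) = x.
Proof.
move=> lx; apply: etrans (tensor_expand (linmap lx)).
apply: eq_bigr => i _; apply/funext => p.
by rewrite scalrfctE; exact: mulRC (x (ps i)) (xs i p).
Qed.

(* The evaluation Hom(P1, Hom_Z(T, Q/Z)) = Hom(P1,R) (x) Hom_Z(T, Q/Z) -> Q/Z. *)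
Definition pairing (gam : P1 -> trchar) : QmodZ := \sum_(i < k1) gam (ps i) (xs i).

Lemma pairing_d0 (Wm : {linear P0 -> trchar}) : pairing (Wm \o d0) = 0.
Proof.
have expand i : Wm (d0 (ps i)) (xs i) =
    \sum_(k < k0) Wm (qs k) (ys k (d0 (ps i)) *: (xs i : P1 -> R^o)).
  rewrite {1}(ys_qs (d0 (ps i))) linear_sum trchar_sum_eval.
  by apply: eq_bigr => k _; rewrite linearZ trcharZE //; exact: linearP.
rewrite /pairing; under eq_bigr do rewrite /= expand.
rewrite exchange_big big1 // => k _.
rewrite -trchar_sum => [|i]; last exact/linear_scale_dual/linearP.
by have /= -> := dual_expand (linearP (ys k \o d0)); exact: trchar_d0.
Qed.

Lemma pairing_functional (W : lmodType R) (psi : {additive (P1 -> W) -> QmodZ})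
    (al : {linear W -> trchar}) :
  (forall w x, linear x -> al w x = psi (tensor x w)) ->
  forall v : {linear P1 -> W}, pairing (al \o v) = psi v.
Proof.
move=> alE v; rewrite /pairing.
under eq_bigr => i _ do rewrite /= (alE _ _ (linearP (xs i))).
by rewrite -raddf_sum tensor_expand.
Qed.

(* Injectivity of T (x) A -> T (x) B, using T (x) X = coker (Hom(P0,X) -> Hom(P1,X))
   for finitely generated projective P0 and P1. *)
Definition tensor_injective (A B : lmodType R) (f : {linear A -> B}) :=
  forall (v : {linear P1 -> A}) (u : {linear P0 -> B}), (forall p, f (v p) = u (d0 p)) ->
  exists w : {linear P0 -> A}, forall p, v p = w (d0 p).

Section ShortExact.
Variables (A B C : lmodType R) (f : {linear A -> B}) (g : {linear B -> C}).
Hypothesis fg_exact : short_exact f g.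

Lemma pairing_comp0 (al : {linear A -> trchar}) : pairing (al \o \0) = 0.
Proof. by rewrite /pairing big1 // => i _; rewrite /= linear0. Qed.

Definition pairing_graph (al : {linear A -> trchar}) : set ((P1 -> B) * QmodZ) :=
  fun z => exists (gam : {linear P1 -> A}) (u : {linear P0 -> B}),
    z = ((f \o gam) + (u \o d0), pairing (al \o gam)).

Lemma pairing_graph_hom al : tensor_injective f -> hom_graph (pairing_graph al).
Proof.
move=> f_tinj; split; first split.
- exists \0, \0; congr pair; first by apply/funext => p; rewrite !fctE /= linear0 addr0.
  by rewrite pairing_comp0.
- move=> _ _ [g1 [u1 ->]] [g2 [u2 ->]]; exists (g1 \- g2), (u1 \- u2); congr pair.
    by apply/funext => p; rewrite !fctE /= opprfctE /= linearB opprD addrACA.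
  by rewrite /pairing -sumrB; apply: eq_bigr => i _; rewrite /= linearB.
- move=> d [gam [u [gam_u ->]]].
  have [w gamE] : exists w : {linear P0 -> A}, forall p, gam p = w (d0 p).
    apply: (f_tinj gam (\- u)) => p.
    have /eqP : f (gam p) + u (d0 p) = 0 := esym (congr1 (fun F => F p) gam_u).
    by rewrite addr_eq0 => /eqP.
  have -> : al \o gam = (al \o w) \o d0 by apply/funext => p; rewrite /= gamE.
  exact: pairing_d0.
Qed.

Lemma hom_contra_exact_of_tensor_injective :
  tensor_injective f -> hom_contra_exact trchar f g.
Proof.
move=> f_tinj; apply: hom_contra_exact_of_extend => // al.
have [Psi PsiE] := divisible_hom_extend QmodZ_divisible (pairing_graph_hom al f_tinj).
have [be beE] : exists be : {linear B -> trchar},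
    forall b x, linear x -> be b x = Psi (tensor x b).
  apply: trchar_of_functional => y b; rewrite -(pairing_comp0 al); apply: PsiE.
  exists \0, (linmap (linear_tensor b (linearP y))); congr pair.
  by apply/funext => p; rewrite !fctE /= linear0 add0r.
exists be => a; apply: trchar_eq => x lx; rewrite beE //.
pose xa := linmap (linear_tensor a lx).
rewrite (PsiE _ (pairing (al \o xa))); last first.
  exists xa, \0; congr pair.
  by apply/funext => p; rewrite !fctE /= addr0 /tensor linearZ.
rewrite /pairing.
under eq_bigr => i _ do rewrite /= /tensor linearZ (trcharZE _ _ (linearP (xs i))).
by rewrite -trchar_sum ?dual_expand // => i; exact/linear_scale_dual/linearP.
Qed.

Lemma tensor_injective_of_hom_contra_exact :
  hom_contra_exact trchar f g -> tensor_injective f.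
Proof.
move=> [_ _ _ extend] v u fvu; apply: contrapT => v_notin.
pose S0 : set (P1 -> A) := fun F => exists w : {linear P0 -> A}, F = w \o d0.
have S0_sub : subgroup S0.
  split; first by exists \0; apply/funext.
  by move=> _ _ [w1 ->] [w2 ->]; exists (w1 \- w2); apply/funext.
have v_out : ~ S0 v.
  by move=> [w vw]; apply: v_notin; exists w => p; rewrite (congr1 (fun F => F p) vw).
have [psi [psi_S0 psi_v]] := QmodZ_separates S0_sub v_out.
have [al alE] : exists al : {linear A -> trchar},
    forall a x, linear x -> al a x = psi (tensor x a).
  apply: trchar_of_functional => y a; apply: psi_S0.
  by exists (linmap (linear_tensor a (linearP y))).
have [be beE] := extend al.
have : pairing (al \o v) = 0.
  have -> : al \o v = (be \o u) \o d0 by apply/funext => p; rewrite /= -fvu beE.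
  exact: pairing_d0.
by rewrite (pairing_functional alE) => /eqP; rewrite (negbTE psi_v).
Qed.

Variables (M : lmodType R) (eps : {linear P0 -> M}).
Hypotheses (eps_surj : forall m, exists x, eps x = m) (eps_d0 : forall y, eps (d0 y) = 0)
  (ker_eps : forall x, eps x = 0 -> exists y, d0 y = x).

Lemma coker_factor (Y : lmodType R) (u : {linear P0 -> Y}) :
  (forall p, u (d0 p) = 0) -> exists h : {linear M -> Y}, forall p, h (eps p) = u p.
Proof. by move=> ud0; apply: linear_factor_surj => // x /ker_eps [y <-]. Qed.

Lemma tensor_injective_of_hom_cov_exact : hom_cov_exact M f g -> tensor_injective f.
Proof.
have [f_inj gf0 _ _] := fg_exact; move=> [_ _ _ lift] v u fvu.
have [h hE] : exists h : {linear M -> C}, forall p, h (eps p) = g (u p).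
  by apply: (coker_factor (u := g \o u)) => p; rewrite /= -fvu gf0.
have [k kE] := lift h.
have [w wE] : exists w : {linear P0 -> A}, forall p, f (w p) = u p - k (eps p).
  apply: (short_exact_factor_ker fg_exact (u := u \- (k \o eps))) => p.
  by rewrite /= linearB kE hE subrr.
exists w => p; apply/eqP; rewrite -subr_eq0; apply/eqP/f_inj.
by rewrite linearB wE fvu eps_d0 linear0 subr0 subrr.
Qed.

Lemma hom_cov_exact_of_tensor_injective :
  projective P0 -> tensor_injective f -> hom_cov_exact M f g.
Proof.
have [_ gf0 _ g_surj] := fg_exact; move=> P0_proj f_tinj.
apply: hom_cov_exact_of_lift => // h.
have [u uE] := P0_proj _ _ _ g_surj (h \o eps).
have [v vE] : exists v : {linear P1 -> A}, forall p, f (v p) = u (d0 p).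
  apply: (short_exact_factor_ker fg_exact (u := u \o d0)) => p.
  by rewrite /= uE /= eps_d0 linear0.
have [w wE] := f_tinj v u vE.
have [k kE] : exists k : {linear M -> B}, forall p, k (eps p) = u p - f (w p).
  by apply: (coker_factor (u := u \- (f \o w))) => p; rewrite /= -wE vE subrr.
exists k => m; have [p <-] := eps_surj m.
by rewrite kE linearB /= uE gf0 subr0.
Qed.

End ShortExact.

End TransposeCharacter.

Lemma fgp_presentation_character (R : pzRingType) (mulRC : forall a b : R, a * b = b * a)
    (M P0 P1 : lmodType R) (d0 : {linear P1 -> P0}) (eps : {linear P0 -> M}) :
  fgp_presentation d0 eps -> exists I : lmodType R,
    forall (A B C : lmodType R) (f : {linear A -> B}) (g : {linear B -> C}),
    short_exact f g -> hom_cov_exact M f g <-> hom_contra_exact I f g.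
Proof.
move=> [P0_fgp P1_fgp eps_surj eps_d0 ker_eps].
have [k1 [xs [ps xs_ps]]] := fg_projective_dual_basis P1_fgp.
have [k0 [ys [qs ys_qs]]] := fg_projective_dual_basis P0_fgp.
exists (trchar_lmodType mulRC d0) => A B C f g fg_exact; split=> [M_exact|I_exact].
  apply: (hom_contra_exact_of_tensor_injective mulRC xs_ps ys_qs fg_exact).
  exact: (tensor_injective_of_hom_cov_exact fg_exact eps_surj eps_d0 ker_eps).
apply: (hom_cov_exact_of_tensor_injective fg_exact eps_surj eps_d0 ker_eps P0_fgp.2).
exact: (tensor_injective_of_hom_contra_exact xs_ps ys_qs I_exact).
Qed.

Lemma in_P_lt_succ_n_projective (R : pzRingType) n (M : lmodType R) :
  in_P_lt_succ n M -> n_projective n M.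
Proof. by move=> M_in A B C f g [_]; apply. Qed.

Unset Implicit Arguments.

Theorem proposition3p6 (R : pzRingType) (n : option nat) (A B C : lmodType R)
  (f : {linear A -> B}) (g : {linear B -> C}) :
  short_exact f g ->
  (n_exact n f g <-> (forall P : lmodType R, n_projective n P -> hom_cov_exact P f g)) /\
  ((forall a b : R, a * b = b * a) ->
   (n_exact n f g <-> (forall I : lmodType R, n_injective n I -> hom_contra_exact I f g))).
Proof.
move=> fg_exact; split=> [|mulRC]; split=> [fg_nexact P P_nproj|hom_exact].
- exact: P_nproj.
- by split=> // M M_in; apply: hom_exact; exact: in_P_lt_succ_n_projective.
- exact: P_nproj.
split=> // M M_in.
have [j M_res] := in_P_lt_succ_resolution M_in.
have [P0 [P1 [d0 [eps M_pres]]]] := fgp_resolution_presentation M_res.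
have [I I_test] := fgp_presentation_character mulRC M_pres.
apply/I_test => //; apply: hom_exact => A' B' C' f' g' [f'g'_exact f'g'_hom].
by apply/I_test => //; exact: f'g'_hom.
Qed.
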